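(* Let $R$ be a semiring and let $\mathrm{Mod}_R$ be the category of $R$-modules. Let $\mathfrak{M}$ be the class of normal monomorphisms and $\mathfrak{E}$ the class of normal epimorphisms in $\mathrm{Mod}_R$. Then $(\mathrm{Mod}_R,\mathfrak{M},\mathfrak{E})$ is a proto-exact category.
   Context: A semiring is a set $R$ with two commutative monoid structures $(R,+,0_R)$ and $(R,\cdot,1_R)$ such that multiplication distributes over addition (and $0_R\cdot a=0_R$). An $R$-module is a commutative monoid $(M,+,0)$ with an action $R\times M\to M$ satisfying the usual module axioms; morphisms are $R$-linear monoid maps. In $\mathrm{Mod}_R$ the zero module is a zero object. A morphism $f:M\to N$ is a normal monomorphism if it is the equalizer of some morphism $g:N\to L$ and the zero map $N\to L$; it is a normal epimorphism if it is the coequalizer of some morphism $g:L\to M$ and the zero map $L\to M$. A proto-exact category is a pointed category $\mathcal{C}$ with two classes of morphisms $\mathfrak{M}$ (admissible monomorphisms) and $\mathfrak{E}$ (admissible epimorphisms) such that: (1) for every object $A$, $0\to A$ lies in $\mathfrak{M}$ and $A\to 0$ lies in $\mathfrak{E}$; (2) $\mathfrak{M}$ and $\mathfrak{E}$ contain all isomorphisms and are closed under composition; (3) a commutative square with top $i:A\to B$, bottom $i':A'\to B'$ in $\mathfrak{M}$ and left $j:A\to A'$, right $j':B\to B'$ in $\mathfrak{E}$ is a pullback if and only if it is a pushout; (4) every pair $i':A'\to B'$ in $\mathfrak{M}$, $j':B\to B'$ in $\mathfrak{E}$ can be completed to such a square which is both a pullback and a pushout, with $i\in\mathfrak{M}$,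 $j\in\mathfrak{E}$; (5) every pair $i:A\to B$ in $\mathfrak{M}$, $j:A\to A'$ in $\mathfrak{E}$ can be completed to such a square which is both a pullback and a pushout, with $i'\in\mathfrak{M}$, $j'\in\mathfrak{E}$. *)

From HB Require Import structures.
From mathcomp Require Import all_boot all_algebra.
Set Implicit Arguments. Unset Strict Implicit. Unset Printing Implicit Defensive.
Import GRing.Theory.
Local Open Scope ring_scope.

(* A semiring (in the sense of the paper: both monoid structures commutative,
   0 absorbing) is a [comPzSemiRingType]; an R-module is an [lSemiModType R]
   (a commutative monoid with a semimodule action).  Morphisms of Mod_R are
   the R-linear monoid maps, represented as functions satisfying [is_hom]. *)

Section ModR.
Variable R : comPzSemiRingType.

Definition is_hom (M N : lSemiModType R) (f : M -> N) : Prop :=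
  [/\ f 0 = 0, (forall x y, f (x + y) = f x + f y)
    & (forall (r : R) x, f (r *: x) = r *: f x)].

Definition zmap (M N : lSemiModType R) : M -> N := fun _ => 0.

Definition is_zero_module (Z : lSemiModType R) : Prop := forall z : Z, z = 0.

Definition morclass := forall (M N : lSemiModType R), (M -> N) -> Prop.

Definition is_equalizer_with_zero (M N L : lSemiModType R)
    (f : M -> N) (g : N -> L) : Prop :=
  is_hom f /\ is_hom g /\ (forall x, g (f x) = 0) /\
  forall (X : lSemiModType R) (h : X -> N), is_hom h ->
    (forall x, g (h x) = 0) ->
    exists u : X -> M, [/\ is_hom u, (forall x, f (u x) = h x) &
      forall v : X -> M, is_hom v -> (forall x, f (v x) = h x) -> v =1 u].

Definition is_coequalizer_with_zero (L M N : lSemiModType R)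
    (g : L -> M) (f : M -> N) : Prop :=
  is_hom f /\ is_hom g /\ (forall x, f (g x) = 0) /\
  forall (X : lSemiModType R) (h : M -> X), is_hom h ->
    (forall x, h (g x) = 0) ->
    exists u : N -> X, [/\ is_hom u, (forall x, u (f x) = h x) &
      forall v : N -> X, is_hom v -> (forall x, v (f x) = h x) -> v =1 u].

Definition normal_mono : morclass := fun M N f =>
  exists (L : lSemiModType R) (g : N -> L), is_equalizer_with_zero f g.

Definition normal_epi : morclass := fun M N f =>
  exists (L : lSemiModType R) (g : L -> M), is_coequalizer_with_zero g f.

Definition is_iso (M N : lSemiModType R) (f : M -> N) : Prop :=
  is_hom f /\ exists g : N -> M,
    [/\ is_hom g, (forall x, g (f x) = x) & (forall y, f (g y) = y)].

(* The square
       A --i--> B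
       |j       |j'
       v        v
       A' -i'-> B'
   (assumed commutative, i.e. j' o i = i' o j). *)
Definition commutes (A B A' B' : lSemiModType R)
    (i : A -> B) (j : A -> A') (i' : A' -> B') (j' : B -> B') : Prop :=
  forall a, j' (i a) = i' (j a).

Definition is_pullback (A B A' B' : lSemiModType R)
    (i : A -> B) (j : A -> A') (i' : A' -> B') (j' : B -> B') : Prop :=
  forall (X : lSemiModType R) (p : X -> B) (q : X -> A'),
    is_hom p -> is_hom q -> (forall x, j' (p x) = i' (q x)) ->
    exists u : X -> A, [/\ is_hom u, (forall x, i (u x) = p x),
      (forall x, j (u x) = q x) &
      forall v : X -> A, is_hom v -> (forall x, i (v x) = p x) ->
        (forall x, j (v x) = q x) -> v =1 u].

Definition is_pushout (A B A' B' : lSemiModType R)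
    (i : A -> B) (j : A -> A') (i' : A' -> B') (j' : B -> B') : Prop :=
  forall (X : lSemiModType R) (p : B -> X) (q : A' -> X),
    is_hom p -> is_hom q -> (forall a, p (i a) = q (j a)) ->
    exists u : B' -> X, [/\ is_hom u, (forall b, u (j' b) = p b),
      (forall a', u (i' a') = q a') &
      forall v : B' -> X, is_hom v -> (forall b, v (j' b) = p b) ->
        (forall a', v (i' a') = q a') -> v =1 u].

Definition proto_exact (Mc Ec : morclass) : Prop :=
  (forall (Z A : lSemiModType R), is_zero_module Z ->
     Mc Z A (@zmap Z A) /\ Ec A Z (@zmap A Z)) /\
  (forall (M N : lSemiModType R) (f : M -> N), is_iso f -> Mc M N f /\ Ec M N f) /\
  (forall (M N P : lSemiModType R) (f : M -> N) (g : N -> P),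
     Mc M N f -> Mc N P g -> Mc M P (g \o f)) /\
  (forall (M N P : lSemiModType R) (f : M -> N) (g : N -> P),
     Ec M N f -> Ec N P g -> Ec M P (g \o f)) /\
  (forall (A B A' B' : lSemiModType R)
          (i : A -> B) (j : A -> A') (i' : A' -> B') (j' : B -> B'),
     Mc A B i -> Mc A' B' i' -> Ec A A' j -> Ec B B' j' ->
     commutes i j i' j' ->
     (is_pullback i j i' j' <-> is_pushout i j i' j')) /\
  (forall (A' B B' : lSemiModType R) (i' : A' -> B') (j' : B -> B'),
     Mc A' B' i' -> Ec B B' j' ->
     exists (A : lSemiModType R) (i : A -> B) (j : A -> A'),
       [/\ Mc A B i, Ec A A' j, commutes i j i' j',
           is_pullback i j i' j' & is_pushout i j i' j']) /\
  (forall (A B A' : lSemiModType R) (i : A -> B) (j : A -> A'),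
     Mc A B i -> Ec A A' j ->
     exists (B' : lSemiModType R) (i' : A' -> B') (j' : B -> B'),
       [/\ Mc A' B' i', Ec B B' j', commutes i j i' j',
           is_pullback i j i' j' & is_pushout i j i' j']).

End ModR.

(* In Mod_R the normal monomorphisms are exactly the injective maps with a
   subtractive image (n + f a = f b forces n into the image), and the normal
   epimorphisms are exactly the surjective maps whose fibres are the classes
   of the Bourne congruence of their kernel (f m = f m' iff m + k = m' + k'
   with k, k' in the kernel).  For a commutative square of such maps, both
   being a pullback and being a pushout turn out to be equivalent to the
   single condition that j'^-1 (im i') is contained in im i.  The missing
   corners are the preimage submodule j'^-1 (im i') of B, and the quotient of
   B by the Bourne congruence of i (ker j). *)

From HB Require Import structures.
From mathcomp Require Import all_boot all_algebra.
From mathcomp Require Import boolp.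
Set Implicit Arguments. Unset Strict Implicit. Unset Printing Implicit Defensive.
Import GRing.Theory.
Local Open Scope ring_scope.

Section Homomorphisms.
Variable R : comPzSemiRingType.
Implicit Types M N P : lSemiModType R.

Lemma hom0 M N (f : M -> N) : is_hom f -> f 0 = 0.
Proof. by case. Qed.

Lemma homD M N (f : M -> N) : is_hom f -> forall x y, f (x + y) = f x + f y.
Proof. by case. Qed.

Lemma homZ M N (f : M -> N) : is_hom f -> forall (r : R) x, f (r *: x) = r *: f x.
Proof. by case. Qed.

Lemma zmap_hom M N : is_hom (@zmap R M N).
Proof. by split => [|x y|r x]; rewrite /zmap ?addr0 ?scaler0. Qed.

Lemma id_hom M : is_hom (@id M).
Proof. by []. Qed.

Lemma comp_hom M N P (f : M -> N) (g : N -> P) :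
  is_hom f -> is_hom g -> is_hom (g \o f).
Proof.
move=> hf hg; split => /= [|x y|r x]; first by rewrite !hom0.
  by rewrite (homD hf) (homD hg).
by rewrite (homZ hf) (homZ hg).
Qed.

Lemma scale_hom M (x : M) : is_hom (fun r : R^o => r *: x).
Proof. by split => [|r s|r s]; rewrite ?scale0r ?scalerDl ?scalerA. Qed.

End Homomorphisms.

Definition subsemimod_prop (R : comPzSemiRingType) (N : lSemiModType R)
    (P : N -> Prop) :=
  [/\ P 0, (forall x y, P x -> P y -> P (x + y))
    & (forall (r : R) x, P x -> P (r *: x))].

Record subsemimod (R : comPzSemiRingType) (N : lSemiModType R) (P : N -> Prop)
    (closedP : subsemimod_prop P) :=
  SubSemimod { subval : N; subvalP : P subval }.

Section Subsemimodule.
Variables (R : comPzSemiRingType) (N : lSemiModType R) (P : N -> Prop).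
Variable closedP : subsemimod_prop P.
Local Notation S := (subsemimod closedP).

Lemma subval_inj : injective (@subval _ _ _ closedP).
Proof. by case=> x px [y py] /= exy; subst y; rewrite (Prop_irrelevance px py). Qed.

HB.instance Definition _ := gen_eqMixin S.
HB.instance Definition _ := gen_choiceMixin S.

Let P0 : P 0. Proof. by case: closedP. Qed.
Let PD x y : P x -> P y -> P (x + y). Proof. by case: closedP => _ + _; apply. Qed.
Let PZ (r : R) x : P x -> P (r *: x). Proof. by case: closedP => _ _; apply. Qed.

Definition sub0 : S := SubSemimod closedP P0.
Definition subadd (a b : S) : S := SubSemimod closedP (PD (subvalP a) (subvalP b)).
Definition subscale (r : R) (a : S) : S := SubSemimod closedP (PZ r (subvalP a)).

Lemma subaddA : associative subadd.
Proof. by move=> a b c; apply: subval_inj; rewrite /= addrA. Qed.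

Lemma subaddC : commutative subadd.
Proof. by move=> a b; apply: subval_inj; rewrite /= addrC. Qed.

Lemma sub0add : left_id sub0 subadd.
Proof. by move=> a; apply: subval_inj; rewrite /= add0r. Qed.

HB.instance Definition _ := GRing.isNmodule.Build S subaddA subaddC sub0add.

Lemma subscaleA a b v : subscale a (subscale b v) = subscale (a * b) v.
Proof. by apply: subval_inj; rewrite /= scalerA. Qed.

Lemma subscale0 v : subscale 0 v = 0.
Proof. by apply: subval_inj; rewrite /= scale0r. Qed.

Lemma subscale1 : left_id 1 subscale.
Proof. by move=> v; apply: subval_inj; rewrite /= scale1r. Qed.

Lemma subscaleDr : right_distributive subscale subadd.
Proof. by move=> r a b; apply: subval_inj; rewrite /= scalerDr. Qed.

Lemma subscaleDl v : {morph subscale^~ v : a b / a + b >-> subadd a b}.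
Proof. by move=> a b; apply: subval_inj; rewrite /= scalerDl. Qed.

HB.instance Definition _ := GRing.Nmodule_isLSemiModule.Build R S
  subscaleA subscale0 subscale1 subscaleDr subscaleDl.

Lemma subval_hom : is_hom (@subval _ _ _ closedP).
Proof. by []. Qed.

End Subsemimodule.

Definition semimod_congr (R : comPzSemiRingType) (N : lSemiModType R)
    (E : N -> N -> Prop) :=
  [/\ (forall x, E x x), (forall x y, E x y -> E y x),
      (forall x y z, E x y -> E y z -> E x z),
      (forall x y x' y', E x x' -> E y y' -> E (x + y) (x' + y'))
    & (forall (r : R) x y, E x y -> E (r *: x) (r *: y))].

(* Elements of the quotient are the equivalence classes themselves, seen as
   predicates on [N]. *)
Record quotsemimod (R : comPzSemiRingType) (N : lSemiModType R)
    (E : N -> N -> Prop) (congrE : semimod_congr E) :=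
  QuotSemimod { qpred : N -> Prop; qpredP : exists n, qpred = E n }.

Section QuotientSemimodule.
Variables (R : comPzSemiRingType) (N : lSemiModType R) (E : N -> N -> Prop).
Variable congrE : semimod_congr E.
Local Notation Q := (quotsemimod congrE).

Let Erefl x : E x x. Proof. by case: congrE. Qed.
Let Esym x y : E x y -> E y x. Proof. by case: congrE => _ + _ _ _; apply. Qed.
Let Etrans x y z : E x y -> E y z -> E x z.
Proof. by case: congrE => _ _ + _ _; apply. Qed.
Let ED x y x' y' : E x x' -> E y y' -> E (x + y) (x' + y').
Proof. by case: congrE => _ _ _ + _; apply. Qed.
Let EZ (r : R) x y : E x y -> E (r *: x) (r *: y).
Proof. by case: congrE => _ _ _ _; apply. Qed.

Lemma qpred_inj : injective (@qpred _ _ _ congrE).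
Proof. by case=> x px [y py] /= exy; subst y; rewrite (Prop_irrelevance px py). Qed.

HB.instance Definition _ := gen_eqMixin Q.
HB.instance Definition _ := gen_choiceMixin Q.

Definition qclass (n : N) : Q := QuotSemimod congrE (ex_intro _ n erefl).
Definition qrepr (q : Q) : N := proj1_sig (cid (qpredP q)).

Lemma eq_qclass a b : qclass a = qclass b <-> E a b.
Proof.
split=> [/(congr1 (@qpred _ _ _ congrE)) /= ->|Eab]; first exact: Erefl.
apply: qpred_inj; apply: funext => x; apply: propext.
by split; apply: Etrans; [apply: Esym|].
Qed.

Lemma qreprK q : qclass (qrepr q) = q.
Proof. by apply: qpred_inj; rewrite /qrepr; case: (cid (qpredP q)). Qed.

Lemma qclassP (q : Q) : exists n, q = qclass n.
Proof. by exists (qrepr q); rewrite qreprK. Qed.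

Lemma qrepr_qclass n : E (qrepr (qclass n)) n.
Proof. by apply/eq_qclass; rewrite qreprK. Qed.

Definition q0 : Q := qclass 0.
Definition qadd (a b : Q) : Q := qclass (qrepr a + qrepr b).
Definition qscale (r : R) (a : Q) : Q := qclass (r *: qrepr a).

Lemma qaddE a b : qadd (qclass a) (qclass b) = qclass (a + b).
Proof. by apply/eq_qclass; apply: ED; apply: qrepr_qclass. Qed.

Lemma qscaleE r a : qscale r (qclass a) = qclass (r *: a).
Proof. by apply/eq_qclass; apply: EZ; apply: qrepr_qclass. Qed.

Lemma qaddA : associative qadd.
Proof.
move=> a b c; case: (qclassP a) => x ->; case: (qclassP b) => y ->.
by case: (qclassP c) => z ->; rewrite !qaddE addrA.
Qed.

Lemma qaddC : commutative qadd.
Proof.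
by move=> a b; case: (qclassP a) => x ->; case: (qclassP b) => y ->; rewrite !qaddE addrC.
Qed.

Lemma q0add : left_id q0 qadd.
Proof. by move=> a; case: (qclassP a) => x ->; rewrite qaddE add0r. Qed.

HB.instance Definition _ := GRing.isNmodule.Build Q qaddA qaddC q0add.

Lemma qscaleA a b v : qscale a (qscale b v) = qscale (a * b) v.
Proof. by case: (qclassP v) => x ->; rewrite !qscaleE scalerA. Qed.

Lemma qscale0 v : qscale 0 v = 0.
Proof. by case: (qclassP v) => x ->; rewrite qscaleE scale0r. Qed.

Lemma qscale1 : left_id 1 qscale.
Proof. by move=> v; case: (qclassP v) => x ->; rewrite qscaleE scale1r. Qed.

Lemma qscaleDr : right_distributive qscale qadd.
Proof.
move=> r a b; case: (qclassP a) => x ->; case: (qclassP b) => y ->.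
by rewrite qaddE !qscaleE qaddE scalerDr.
Qed.

Lemma qscaleDl v : {morph qscale^~ v : a b / a + b >-> qadd a b}.
Proof. by move=> a b; case: (qclassP v) => x ->; rewrite !qscaleE qaddE scalerDl. Qed.

HB.instance Definition _ := GRing.Nmodule_isLSemiModule.Build R Q
  qscaleA qscale0 qscale1 qscaleDr qscaleDl.

Lemma qclass_hom : is_hom qclass.
Proof. by split => [|x y|r x]; rewrite -?qaddE -?qscaleE. Qed.

End QuotientSemimodule.

Section NormalMaps.
Variable R : comPzSemiRingType.
Implicit Types L M N X : lSemiModType R.

Definition bourne L M (g : L -> M) (m m' : M) : Prop :=
  exists a b, m + g a = m' + g b.

Lemma bourne_congr L M (g : L -> M) : is_hom g -> semimod_congr (bourne g).
Proof.
move=> hg; split.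
- by move=> x; exists 0, 0.
- by move=> x y [a [b h]]; exists b, a.
- move=> x y z [a [b h1]] [c [d h2]]; exists (a + c), (d + b).
  by rewrite !(homD hg) addrA h1 -addrA (addrC (g b)) addrA h2 addrA.
- move=> x y x' y' [a [b h1]] [c [d h2]]; exists (a + c), (b + d).
  by rewrite !(homD hg) addrACA h1 h2 addrACA.
- move=> r x y [a [b h]]; exists (r *: a), (r *: b).
  by rewrite !(homZ hg) -!scalerDr h.
Qed.

Lemma qclass_bourne_im L M (g : L -> M) (hg : is_hom g) a :
  qclass (bourne_congr hg) (g a) = 0.
Proof. by apply/eq_qclass; exists 0, a; rewrite (hom0 hg) addr0 add0r. Qed.

Lemma qclass_bourne_eq0 L M (g : L -> M) (hg : is_hom g) m :
  qclass (bourne_congr hg) m = 0 -> exists a b, m + g a = g b.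
Proof. by move/eq_qclass => [a [b h]]; exists a, b; rewrite h add0r. Qed.

Lemma ker_subsemimod M N (g : M -> N) : is_hom g -> subsemimod_prop (fun m => g m = 0).
Proof.
move=> hg; split; first exact: hom0.
  by move=> x y hx hy; rewrite (homD hg) hx hy addr0.
by move=> r x hx; rewrite (homZ hg) hx scaler0.
Qed.

Lemma im_subsemimod M N (f : M -> N) :
  is_hom f -> subsemimod_prop (fun n => exists m, f m = n).
Proof.
move=> hf; split; first by exists 0; exact: hom0.
  by move=> x y [a <-] [b <-]; exists (a + b); rewrite (homD hf).
by move=> r x [a <-]; exists (r *: a); rewrite (homZ hf).
Qed.

Definition surjective M N (f : M -> N) := forall n, exists m, f m = n.

Definition subtractive M N (f : M -> N) :=
  forall n a b, n + f a = f b -> exists c, n = f c.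

Definition fibres_ker M N (f : M -> N) := forall m m', f m = f m' ->
  exists k k', [/\ f k = 0, f k' = 0 & m + k = m' + k'].

Definition normal_mono_spec M N (f : M -> N) :=
  [/\ is_hom f, injective f & subtractive f].

Definition normal_epi_spec M N (f : M -> N) :=
  [/\ is_hom f, surjective f & fibres_ker f].

Lemma inj_hom_lift X M N (f : M -> N) (h : X -> N) :
  is_hom f -> injective f -> is_hom h -> (forall x, exists c, h x = f c) ->
  exists u : X -> M, [/\ is_hom u, (forall x, f (u x) = h x) &
    forall v : X -> M, is_hom v -> (forall x, f (v x) = h x) -> v =1 u].
Proof.
move=> hf injf hh imh.
pose u x := proj1_sig (cid (imh x)).
have fu x : f (u x) = h x by rewrite /u; case: (cid (imh x)).
exists u; split=> [|//|v hv fv x]; last by apply: injf; rewrite fv fu.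
by split=> [|x y|r x]; apply: injf;
  rewrite ?(hom0 hf) ?(homD hf) ?(homZ hf) !fu ?(hom0 hh) ?(homD hh) ?(homZ hh).
Qed.

Lemma epi_hom_factor M N X (f : M -> N) (h : M -> X) :
  is_hom f -> is_hom h -> surjective f -> fibres_ker f ->
  (forall k, f k = 0 -> h k = 0) ->
  exists u : N -> X, [/\ is_hom u, (forall m, u (f m) = h m) &
    forall v : N -> X, is_hom v -> (forall m, v (f m) = h m) -> v =1 u].
Proof.
move=> hf hh surjf fibf hker.
have h_fibres m m' : f m = f m' -> h m = h m'.
  move=> /fibf [k [k' [fk fk' e]]].
  by rewrite -[h m]addr0 -(hker _ fk) -(homD hh) e (homD hh) (hker _ fk') addr0.
pose s n := proj1_sig (cid (surjf n)).
have fs n : f (s n) = n by rewrite /s; case: (cid (surjf n)).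
have hs m : h (s (f m)) = h m by apply: h_fibres; rewrite fs.
exists (h \o s); split=> [|//|v hv vf n]; last by rewrite -(fs n) vf /= hs.
split=> /= [|x y|r x].
- by rewrite -(hom0 hf) hs (hom0 hh).
- by rewrite -{1}(fs x) -{1}(fs y) -(homD hf) hs (homD hh).
- by rewrite -{1}(fs x) -(homZ hf) hs (homZ hh).
Qed.

Lemma normal_monoP M N (f : M -> N) : normal_mono f <-> normal_mono_spec f.
Proof.
split=> [[L [g [hf [hg [gf univ]]]]]|[hf injf subf]].
- split=> // [x y fxy|n a b e].
  + (* [r |-> r *: x] and [r |-> r *: y] lift the same map [R^o -> N]. *)
    have gfx r : g ((r : R^o) *: f x) = 0 by rewrite (homZ hg) gf scaler0.
    have fy r : f ((r : R^o) *: y) = r *: f x by rewrite (homZ hf) fxy.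
    have [u [_ _ u_uniq]] := univ _ _ (scale_hom (f x)) gfx.
    have ux := u_uniq _ (scale_hom x) (fun r => homZ hf r x).
    have uy := u_uniq _ (scale_hom y) fy.
    by move: (ux 1) (uy 1); rewrite !scale1r => -> ->.
  + have gn : g n = 0 by have := congr1 g e; rewrite (homD hg) !gf addr0.
    have kerg := ker_subsemimod hg.
    have [u [_ fu _]] := univ _ _ (subval_hom kerg) (@subvalP _ _ _ kerg).
    by exists (u (SubSemimod kerg gn)); rewrite fu.
- pose bf := bourne_congr hf.
  exists (quotsemimod bf), (qclass bf); split=> //; split; first exact: qclass_hom.
  split=> [x|X h hh hz]; first exact: qclass_bourne_im.
  apply: inj_hom_lift => // x.
  by have [a [b /subf]] := qclass_bourne_eq0 (hz x).
Qed.

Lemma normal_epiP M N (f : M -> N) : normal_epi f <-> normal_epi_spec f.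
Proof.
split=> [[L [g [hf [hg [fg univ]]]]]|[hf surjf fibf]].
- have surjf : surjective f.
  (* The corestriction of [f] to its image also kills [g]; uniqueness of the
     factorization of [f] through itself makes the image all of [N]. *)
    have imf := im_subsemimod hf.
    pose h m := SubSemimod imf (ex_intro (fun m' => f m' = f m) m erefl).
    have hh : is_hom h.
      by split=> [|x y|r x]; apply: subval_inj; rewrite /= ?(hom0 hf) ?(homD hf) ?(homZ hf).
    have hg0 x : h (g x) = 0 by apply: subval_inj; exact: fg.
    have [u [hu uf _]] := univ _ h hh hg0.
    have [u0 [_ _ u0_uniq]] := univ _ f hf fg.
    have e1 := u0_uniq _ (id_hom N) (fun x => erefl).
    have e2 : (@subval _ _ _ imf \o u) =1 u0.
      by apply: u0_uniq => [|x]; [exact: comp_hom hu (subval_hom imf) | rewrite /= uf].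
    by move=> n; have := subvalP (u n); have /= -> := e2 n; rewrite -(e1 n).
  split=> // m m' e.
  pose bg := bourne_congr hg.
  have [u [_ uf _]] := univ _ (qclass bg) (qclass_hom bg) (qclass_bourne_im hg).
  have : qclass bg m = qclass bg m' by rewrite -!uf e.
  by move/eq_qclass => [a [b e2]]; exists (g a), (g b); rewrite !fg.
- have kerf := ker_subsemimod hf.
  exists (subsemimod kerf), (@subval _ _ _ kerf); split=> //; split.
    exact: subval_hom.
  split=> [x|X h hh hz]; first exact: (subvalP x).
  apply: (epi_hom_factor hf hh surjf fibf) => k fk.
  exact: (hz (SubSemimod kerf fk)).
Qed.

End NormalMaps.

Section CommutativeSquare.
Variable R : comPzSemiRingType.
Variables (A B A' B' : lSemiModType R).
Variables (i : A -> B) (j : A -> A') (i' : A' -> B') (j' : B -> B').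
Hypotheses (hi : is_hom i) (hi' : is_hom i') (hj' : is_hom j').
Hypothesis ij_comm : commutes i j i' j'.

Definition preim_im_sub := forall b a', j' b = i' a' -> exists a, i a = b.

Lemma pullback_preim_im_sub : is_pullback i j i' j' -> preim_im_sub.
Proof.
move=> pb b a' e.
have e_line r : j' ((r : R^o) *: b) = i' (r *: a') by rewrite (homZ hj') (homZ hi') e.
have [u [_ iu _ _]] := pb _ _ _ (scale_hom b) (scale_hom a') e_line.
by exists (u 1); rewrite iu scale1r.
Qed.

Lemma preim_im_sub_pullback :
  injective i -> injective i' -> preim_im_sub -> is_pullback i j i' j'.
Proof.
move=> inj_i inj_i' preim X p q hp hq e.
have [u [hu iu u_uniq]] := inj_hom_lift hi inj_i hp (fun x =>
  let: ex_intro a ia := preim _ _ (e x) in ex_intro _ a (esym ia)).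
exists u; split=> // [x|v hv iv _]; last exact: u_uniq.
by apply: inj_i'; rewrite -ij_comm iu e.
Qed.

Lemma preim_im_sub_pushout : injective i' -> surjective j -> normal_epi_spec j' ->
  preim_im_sub -> is_pushout i j i' j'.
Proof.
move=> inj_i' surj_j [_ surj_j' fib_j'] preim X p q hp hq e.
have p_ker k : j' k = 0 -> p k = 0.
  move=> j'k; have [a ia] := preim k 0 (etrans j'k (esym (hom0 hi'))).
  have ja : j a = 0 by apply: inj_i'; rewrite -ij_comm ia j'k (hom0 hi').
  by rewrite -ia e ja (hom0 hq).
have [u [hu uj' u_uniq]] := epi_hom_factor hj' hp surj_j' fib_j' p_ker.
exists u; split=> // [a'|v hv vj' _]; last exact: u_uniq.
by have [a <-] := surj_j a'; rewrite -ij_comm uj' e.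
Qed.

(* The witness is the class of [b] in [B] modulo the Bourne congruence of the
   image of [i], which the pushout property sends to zero. *)
Lemma pushout_preim_im_sub : subtractive i -> is_pushout i j i' j' -> preim_im_sub.
Proof.
move=> sub_i po b a' e.
pose bi := bourne_congr hi.
have [u [_ uj' ui' _]] :=
  po _ _ _ (qclass_hom bi) (@zmap_hom R A' _) (qclass_bourne_im hi).
have : qclass bi b = 0 by rewrite -uj' e ui'.
by move/qclass_bourne_eq0 => [a1 [a2 /sub_i [c ->]]]; exists c.
Qed.

End CommutativeSquare.

Lemma pullback_iff_pushout (R : comPzSemiRingType) (A B A' B' : lSemiModType R)
    (i : A -> B) (j : A -> A') (i' : A' -> B') (j' : B -> B') :
  normal_mono_spec i -> normal_mono_spec i' ->
  normal_epi_spec j -> normal_epi_spec j' -> commutes i j i' j' ->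
  is_pullback i j i' j' <-> is_pushout i j i' j'.
Proof.
move=> [hi inj_i sub_i] [hi' inj_i' _] [_ surj_j _] epi_j' ij_comm.
have hj' : is_hom j' by case: epi_j'.
split=> [/(pullback_preim_im_sub hi' hj') | /(pushout_preim_im_sub hi sub_i)].
  exact: preim_im_sub_pushout.
exact: preim_im_sub_pullback.
Qed.

Section PullbackCompletion.
Variable R : comPzSemiRingType.
Variables (A' B B' : lSemiModType R) (i' : A' -> B') (j' : B -> B').
Hypotheses (mono_i' : normal_mono_spec i') (epi_j' : normal_epi_spec j').

Let hi' : is_hom i'. Proof. by case: mono_i'. Qed.
Let inj_i' : injective i'. Proof. by case: mono_i'. Qed.
Let sub_i' : subtractive i'. Proof. by case: mono_i'. Qed.
Let hj' : is_hom j'. Proof. by case: epi_j'. Qed.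
Let surj_j' : surjective j'. Proof. by case: epi_j'. Qed.
Let fib_j' : fibres_ker j'. Proof. by case: epi_j'. Qed.

Lemma preim_im_subsemimod : subsemimod_prop (fun b => exists a', j' b = i' a').
Proof.
split; first by exists 0; rewrite !hom0.
  by move=> x y [a e] [a2 e2]; exists (a + a2); rewrite (homD hj') (homD hi') e e2.
by move=> r x [a e]; exists (r *: a); rewrite (homZ hj') (homZ hi') e.
Qed.

Local Notation A := (subsemimod preim_im_subsemimod).

Definition pullback_incl : A -> B := @subval _ _ _ preim_im_subsemimod.
Definition pullback_map (s : A) : A' := proj1_sig (cid (subvalP s)).

Lemma pullback_commutes : commutes pullback_incl pullback_map i' j'.
Proof. by move=> s; rewrite /pullback_map; case: (cid (subvalP s)). Qed.

Lemma pullback_map_hom : is_hom pullback_map.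
Proof.
split=> [|x y|r x]; apply: inj_i'; rewrite -?pullback_commutes.
- by rewrite !hom0.
- by rewrite (homD hi') -!pullback_commutes (homD hj').
- by rewrite (homZ hi') -!pullback_commutes (homZ hj').
Qed.

Lemma pullback_preim_im : preim_im_sub pullback_incl i' j'.
Proof. by move=> b a' e; exists (SubSemimod preim_im_subsemimod (ex_intro _ a' e)). Qed.

Lemma pullback_incl_normal : normal_mono_spec pullback_incl.
Proof.
split=> [||n a b e]; [exact: subval_hom | exact: subval_inj |].
have : j' n + i' (pullback_map a) = i' (pullback_map b).
  by rewrite -!pullback_commutes -(homD hj') e.
move=> /sub_i' [c ec].
by exists (SubSemimod preim_im_subsemimod (ex_intro _ c ec)).
Qed.

Lemma pullback_map_surj : surjective pullback_map.
Proof.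
move=> a'; have [b e] := surj_j' (i' a').
exists (SubSemimod preim_im_subsemimod (ex_intro _ a' e)).
by apply: inj_i'; rewrite -pullback_commutes.
Qed.

Lemma pullback_map_normal : normal_epi_spec pullback_map.
Proof.
split=> [||x y e]; [exact: pullback_map_hom | exact: pullback_map_surj |].
have : j' (pullback_incl x) = j' (pullback_incl y) by rewrite !pullback_commutes e.
move=> /fib_j' [k [k' [j'k j'k' e2]]].
have k_in : j' k = i' 0 by rewrite j'k hom0.
have k'_in : j' k' = i' 0 by rewrite j'k' hom0.
exists (SubSemimod preim_im_subsemimod (ex_intro _ 0 k_in)).
exists (SubSemimod preim_im_subsemimod (ex_intro _ 0 k'_in)).
by split; [apply: inj_i'; rewrite -pullback_commutes hom0 ..| apply: subval_inj].
Qed.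

Lemma pullback_completion :
  exists (A : lSemiModType R) (i : A -> B) (j : A -> A'),
    [/\ normal_mono_spec i, normal_epi_spec j, commutes i j i' j',
        is_pullback i j i' j' & is_pushout i j i' j'].
Proof.
exists A, pullback_incl, pullback_map; split.
- exact: pullback_incl_normal.
- exact: pullback_map_normal.
- exact: pullback_commutes.
- exact: preim_im_sub_pullback (subval_hom _) pullback_commutes
    (@subval_inj _ _ _ _) inj_i' pullback_preim_im.
- exact: preim_im_sub_pushout hi' hj' pullback_commutes inj_i'
    pullback_map_surj epi_j' pullback_preim_im.
Qed.

End PullbackCompletion.

Section PushoutCompletion.
Variable R : comPzSemiRingType.
Variables (A B A' : lSemiModType R) (i : A -> B) (j : A -> A').
Hypotheses (mono_i : normal_mono_spec i) (epi_j : normal_epi_spec j).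

Let hi : is_hom i. Proof. by case: mono_i. Qed.
Let inj_i : injective i. Proof. by case: mono_i. Qed.
Let sub_i : subtractive i. Proof. by case: mono_i. Qed.
Let hj : is_hom j. Proof. by case: epi_j. Qed.
Let surj_j : surjective j. Proof. by case: epi_j. Qed.
Let fib_j : fibres_ker j. Proof. by case: epi_j. Qed.

Let kerj := ker_subsemimod hj.

Definition ker_image : subsemimod kerj -> B := i \o @subval _ _ _ kerj.

Lemma ker_image_hom : is_hom ker_image.
Proof. exact: comp_hom (subval_hom _) hi. Qed.

Local Notation bk := (bourne_congr ker_image_hom).

Definition pushout_proj : B -> quotsemimod bk := qclass bk.

Lemma pushout_proj_hom : is_hom pushout_proj.
Proof. exact: qclass_hom. Qed.

Let sect a' := proj1_sig (cid (surj_j a')).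
Let sectK a' : j (sect a') = a'. Proof. by rewrite /sect; case: (cid (surj_j a')). Qed.

Definition pushout_map (a' : A') : quotsemimod bk := pushout_proj (i (sect a')).

Lemma pushout_commutes : commutes i j pushout_map pushout_proj.
Proof.
move=> a; apply/eq_qclass; have [k [k' [jk jk' e]]] := fib_j (sectK (j a)).
by exists (SubSemimod kerj jk'), (SubSemimod kerj jk); rewrite /= -!(homD hi) e.
Qed.

Lemma pushout_map_hom : is_hom pushout_map.
Proof.
split=> [|x y|r x].
- by have := pushout_commutes 0; rewrite (hom0 hj) (hom0 hi) (hom0 pushout_proj_hom).
- have [a <-] := surj_j x; have [b <-] := surj_j y.
  by rewrite -(homD hj) -!pushout_commutes (homD hi) (homD pushout_proj_hom).
- have [a <-] := surj_j x.
  by rewrite -(homZ hj) -!pushout_commutes (homZ hi) (homZ pushout_proj_hom).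
Qed.

Lemma pushout_map_inj : injective pushout_map.
Proof.
move=> x y; have [a <-] := surj_j x; have [b <-] := surj_j y.
rewrite -!pushout_commutes => /eq_qclass [k1 [k2]].
rewrite /ker_image /= -!(homD hi) => /inj_i /(congr1 j).
by rewrite !(homD hj) (subvalP k1) (subvalP k2) !addr0.
Qed.

Lemma pushout_preim_im : preim_im_sub i pushout_map pushout_proj.
Proof.
move=> b a' e; have [a ea] := surj_j a'.
move: e; rewrite -ea -pushout_commutes => /eq_qclass [k1 [k2 /= e]].
rewrite -(homD hi) in e.
by have [c ->] := sub_i e; exists c.
Qed.

Lemma pushout_proj_normal : normal_epi_spec pushout_proj.
Proof.
split=> [||b1 b2 /eq_qclass [k1 [k2 e]]]; first exact: pushout_proj_hom.
  by move=> n; have [m ->] := qclassP n; exists m.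
by exists (ker_image k1), (ker_image k2); split=> //; exact: qclass_bourne_im.
Qed.

Lemma pushout_map_normal : normal_mono_spec pushout_map.
Proof.
split=> [||n x y]; [exact: pushout_map_hom | exact: pushout_map_inj |].
have [c ->] := qclassP n; have [a <-] := surj_j x; have [b <-] := surj_j y.
rewrite -!pushout_commutes -(homD pushout_proj_hom) => /eq_qclass [k1 [k2 /= e]].
rewrite -addrA -!(homD hi) in e.
by have [z ez] := sub_i e; exists (j z); rewrite -pushout_commutes -ez.
Qed.

Lemma pushout_completion :
  exists (B' : lSemiModType R) (i' : A' -> B') (j' : B -> B'),
    [/\ normal_mono_spec i', normal_epi_spec j', commutes i j i' j',
        is_pullback i j i' j' & is_pushout i j i' j'].
Proof.
exists (quotsemimod bk), pushout_map, pushout_proj; split.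
- exact: pushout_map_normal.
- exact: pushout_proj_normal.
- exact: pushout_commutes.
- exact: preim_im_sub_pullback hi pushout_commutes inj_i pushout_map_inj
    pushout_preim_im.
- exact: preim_im_sub_pushout pushout_map_hom pushout_proj_hom pushout_commutes
    pushout_map_inj surj_j pushout_proj_normal pushout_preim_im.
Qed.

End PushoutCompletion.

Section ClosureProperties.
Variable R : comPzSemiRingType.
Implicit Types M N P Z : lSemiModType R.

Lemma zmap_normal_mono Z M : is_zero_module Z -> normal_mono_spec (@zmap R Z M).
Proof.
move=> Z0; split=> [|x y _|n a b e]; first exact: zmap_hom.
  by rewrite (Z0 x) (Z0 y).
by exists 0; rewrite /zmap addr0 in e.
Qed.

Lemma zmap_normal_epi M Z : is_zero_module Z -> normal_epi_spec (@zmap R M Z).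
Proof.
move=> Z0; split=> [|n|m m' _]; first exact: zmap_hom.
  by exists 0; rewrite (Z0 n).
by exists m', m; rewrite /zmap addrC.
Qed.

Lemma iso_normal_mono M N (f : M -> N) : is_iso f -> normal_mono_spec f.
Proof.
move=> [hf [g [_ gK fK]]]; split=> // [|n a b _]; first exact: can_inj gK.
by exists (g n); rewrite fK.
Qed.

Lemma iso_normal_epi M N (f : M -> N) : is_iso f -> normal_epi_spec f.
Proof.
move=> [hf [g [_ gK fK]]]; split=> // [n|m m' e]; first by exists (g n).
by exists 0, 0; rewrite (hom0 hf) (can_inj gK e).
Qed.

Lemma normal_mono_comp M N P (f : M -> N) (g : N -> P) :
  normal_mono_spec f -> normal_mono_spec g -> normal_mono_spec (g \o f).
Proof.
move=> [hf inj_f sub_f] [hg inj_g sub_g].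
split=> [||n a b /= e]; [exact: comp_hom | exact: inj_comp |].
have [c ec] := sub_g _ _ _ e.
have : g (c + f a) = g (f b) by rewrite (homD hg) -ec.
by move=> /inj_g /sub_f [d cd]; exists d; rewrite ec cd.
Qed.

Lemma normal_epi_comp M N P (f : M -> N) (g : N -> P) :
  normal_epi_spec f -> normal_epi_spec g -> normal_epi_spec (g \o f).
Proof.
move=> [hf surj_f fib_f] [hg surj_g fib_g].
split=> [|p|m m' /fib_g [k [k' [gk gk' e]]]]; first exact: comp_hom.
  by have [n <-] := surj_g p; have [m <-] := surj_f n; exists m.
have [x fx] := surj_f k; have [x' fx'] := surj_f k'.
have : f (m + x) = f (m' + x') by rewrite !(homD hf) fx fx'.
move=> /fib_f [y [y' [fy fy' e2]]].
exists (x + y), (x' + y'); split=> /=.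
- by rewrite (homD hf) fx fy addr0.
- by rewrite (homD hf) fx' fy' addr0.
- by rewrite !addrA.
Qed.

End ClosureProperties.

Theorem theoremA (R : comPzSemiRingType) :
  proto_exact (@normal_mono R) (@normal_epi R).
Proof.
split; last split; last split; last split; last split; last split.
- move=> Z M Z0; rewrite normal_monoP normal_epiP.
  by split; [exact: zmap_normal_mono | exact: zmap_normal_epi].
- move=> M N f iso_f; rewrite normal_monoP normal_epiP.
  by split; [exact: iso_normal_mono | exact: iso_normal_epi].
- by move=> M N P f g; rewrite !normal_monoP; exact: normal_mono_comp.
- by move=> M N P f g; rewrite !normal_epiP; exact: normal_epi_comp.
- move=> A B A' B' i j i' j'; rewrite !normal_monoP !normal_epiP.
  exact: pullback_iff_pushout.
- move=> A' B B' i' j' /normal_monoP mono_i' /normal_epiP epi_j'.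
  have [A [i [j [? ? ? ? ?]]]] := pullback_completion mono_i' epi_j'.
  by exists A, i, j; split=> //; [apply/normal_monoP | apply/normal_epiP].
- move=> A B A' i j /normal_monoP mono_i /normal_epiP epi_j.
  have [B' [i' [j' [? ? ? ? ?]]]] := pushout_completion mono_i epi_j.
  by exists B', i', j'; split=> //; [apply/normal_monoP | apply/normal_epiP].
Qed.
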